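(* Let $X\times G\to X$ be a continuous right action of a locally compact Hausdorff group on a Hausdorff space, and let $F\subseteq X$ be a closed subset such that the action is $F$-proper. Then $FG\subseteq X$ is closed.
   Context: For $A,B\subseteq X$ set $\langle A:B\rangle:=\{g\in G: Bg\cap A\neq\emptyset\}$ and write $A\perp B$ if it is relatively compact in $G$. For closed $F$, the action is $F$-proper if for every $x\in X$ there are neighborhoods $V_x\ni x$ and $V_F\supseteq F$ with $V_F\perp V_x$. *)

From mathcomp Require Import all_boot all_order all_algebra.
From mathcomp Require Import all_classical all_reals all_analysis.
Set Implicit Arguments. Unset Strict Implicit. Unset Printing Implicit Defensive.
Local Open Scope classical_set_scope.

Definition topological_group (G : topologicalType)
  (mul : G -> G -> G) (inv : G -> G) (one : G) : Prop :=
  (forall a b c, mul a (mul b c) = mul (mul a b) c) /\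
  (forall a, mul one a = a) /\ (forall a, mul a one = a) /\
  (forall a, mul (inv a) a = one) /\ (forall a, mul a (inv a) = one) /\
  continuous (fun p : G * G => mul p.1 p.2) /\ continuous inv.

Definition continuous_right_action (X G : topologicalType)
  (mul : G -> G -> G) (one : G) (act : X -> G -> X) : Prop :=
  [/\ (forall x, act x one = x),
      (forall x g h, act (act x g) h = act x (mul g h)) &
      continuous (fun p : X * G => act p.1 p.2)].

Definition transporter (X G : Type) (act : X -> G -> X) (A B : set X) : set G :=
  [set g | exists2 b, B b & A (act b g)].

Definition perp (X G : topologicalType) (act : X -> G -> X) (A B : set X) : Prop :=
  compact (closure (transporter act A B)).

Definition set_nbhs (X : topologicalType) (F V : set X) : Prop :=
  exists2 U, open U & F `<=` U /\ U `<=` V.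

Definition F_proper (X G : topologicalType) (act : X -> G -> X) (F : set X) : Prop :=
  forall x : X, exists VF, exists Vx,
    [/\ set_nbhs F VF, nbhs x Vx & perp act VF Vx].

Definition orbit_set (X G : Type) (act : X -> G -> X) (F : set X) : set X :=
  [set act f g | f in F & g in [set: G]].

From mathcomp Require Import all_boot all_order all_algebra.
From mathcomp Require Import all_classical all_reals all_analysis.
Local Open Scope classical_set_scope.
Set Implicit Arguments.
Unset Strict Implicit.

(* Let y be in the closure of F G. The sets <F : W> of group elements moving
   some point of a neighbourhood W of y into F form a proper filter base on G,
   because W meets F G. F-properness makes <F : Vx> relatively compact for a
   neighbourhood Vx of y, so this filter has a cluster point h. Continuity of
   the action puts y h in the closure of F, which is F, and then
   y = (y h) h^-1 lies in F G. *)

Section Transporter.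
Variables (X G : Type) (act : X -> G -> X).

Lemma transporterS (A A' B B' : set X) :
  A `<=` A' -> B `<=` B' -> transporter act A B `<=` transporter act A' B'.
Proof. by move=> AA' BB' g [b Bb Abg]; exists b; [apply: BB' | apply: AA']. Qed.

End Transporter.

Section RightAction.
Variables (X G : Type) (mul : G -> G -> G) (inv : G -> G) (one : G).
Variable act : X -> G -> X.
Hypothesis act1 : forall x, act x one = x.
Hypothesis actM : forall x g h, act (act x g) h = act x (mul g h).
Hypothesis mulV : forall g, mul g (inv g) = one.

Lemma act_actV x g : act (act x g) (inv g) = x.
Proof. by rewrite actM mulV act1. Qed.

Lemma orbit_set_act (F : set X) y h : F (act y h) -> orbit_set act F y.
Proof. by move=> Fyh; exists (act y h) => //; exists (inv h); rewrite ?act_actV. Qed.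

Lemma transporter_neq0 (F W : set X) :
  W `&` orbit_set act F !=set0 -> transporter act F W !=set0.
Proof.
move=> [z [Wz [f Ff [g _ fgz]]]]; exists (inv g), z => //.
by rewrite -fgz act_actV.
Qed.

End RightAction.

Section ReturnFilter.
Variables (X G : topologicalType) (act : X -> G -> X) (F : set X) (y : X).

Definition return_filter : set_system G :=
  filter_from (nbhs y) (transporter act F).

Lemma return_filter_filter : Filter return_filter.
Proof.
apply: filter_from_filter; first by exists setT; apply: filterT.
move=> W W' yW yW'; exists (W `&` W'); first exact: filterI.
by move=> g tg; split; apply: transporterS tg => // x [].
Qed.

Lemma return_filter_proper (mul : G -> G -> G) (inv : G -> G) (one : G) :
  (forall x, act x one = x) ->
  (forall x g h, act (act x g) h = act x (mul g h)) ->
  (forall g, mul g (inv g) = one) ->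
  closure (orbit_set act F) y -> ProperFilter return_filter.
Proof.
move=> act1 actM mulV yFG; apply: filter_from_proper.
  exact: return_filter_filter.
move=> W yW; apply: (transporter_neq0 act1 actM mulV).
by rewrite setIC; apply: yFG.
Qed.

Lemma return_filter_cluster h :
  continuous (fun p : X * G => act p.1 p.2) ->
  cluster return_filter h -> closure F (act y h).
Proof.
move=> actC hclu N yhN.
have [[A B] /= [yA hB] ABN] := actC (y, h) _ yhN.
have [g [[x Ax Fxg] Bg]] := hclu _ B (in_filter_from _ yA) hB.
by exists (act x g); split => //; apply: (ABN (x, g)).
Qed.

End ReturnFilter.

Theorem corollary2p11 (G X : topologicalType)
  (mul : G -> G -> G) (inv : G -> G) (one : G) (act : X -> G -> X)
  (F : set X) :
  topological_group mul inv one ->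
  locally_compact [set: G] -> hausdorff_space G ->
  hausdorff_space X ->
  continuous_right_action mul one act ->
  closed F -> F_proper act F ->
  closed (orbit_set act F).
Proof.
move=> [_ [_ [_ [_ [mulV _]]]]] _ _ _ [act1 actM actC] clF Fp y yFG.
have [VF [Vx [[U _ [FU UVF]] yVx relcpt]]] := Fp y.
have returnK : return_filter act F y (closure (transporter act VF Vx)).
  exists Vx => // g tg; apply: subset_closure.
  by apply: transporterS tg => // x /FU /UVF.
have [h [_ hclu]] :=
  relcpt _ (return_filter_proper act1 actM mulV yFG) returnK.
exact/(orbit_set_act act1 actM mulV)/clF/(return_filter_cluster actC hclu).
Qed.
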